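(* Let $\mathcal T$ be an infinite set of positive integers and for each $t\in\mathcal T$ let $H_t$ be a triangle-free graph on $t$ vertices that is $d$-regular with $d=\Theta(t^{2/3})$ and all of whose eigenvalues other than the largest have absolute value $O(t^{1/3})$. Then for any choice of subgraphs $H'_t\subseteq H_t$ ($t\in\mathcal T$) with $|H'_t|=(1-o(1))|H_t|$, $H'_t$ has a connected component with $t-o(t)$ vertices (asymptotics as $t\to\infty$ in $\mathcal T$).
   Context: $|H|$ denotes the number of edges. Eigenvalues are those of the adjacency matrix. *)

From HB Require Import structures.
From mathcomp Require Import all_boot all_order all_algebra.
From mathcomp Require Import reals exp.
Set Implicit Arguments. Unset Strict Implicit. Unset Printing Implicit Defensive.
Import Order.TTheory GRing.Theory Num.Theory.
Local Open Scope ring_scope.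

Definition simple_graph (n : nat) (e : rel 'I_n) : Prop :=
  symmetric e /\ irreflexive e.

(* number of edges |H| (unordered pairs) *)
Definition nedges (n : nat) (e : rel 'I_n) : nat :=
  #|[set p : 'I_n * 'I_n | (p.1 < p.2)%N && e p.1 p.2]|.

Definition triangle_free (n : nat) (e : rel 'I_n) : Prop :=
  forall x y z : 'I_n, ~~ [&& e x y, e y z & e z x].

Definition regular (n : nat) (e : rel 'I_n) (d : nat) : Prop :=
  forall v : 'I_n, #|[set u | e v u]| = d.

(* H' is a subgraph of H (on the same vertex set; removed vertices can be
   regarded as isolated, which does not affect large components). *)
Definition subgraph (n : nat) (e' e : rel 'I_n) : Prop :=
  simple_graph e' /\ forall x y, e' x y -> e x y.

Definition adjmx (R : realType) (n : nat) (e : rel 'I_n) : 'M[R]_n :=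
  \matrix_(i, j) (e i j)%:R.

Definition spectrum (R : realType) (n : nat) (A : 'M[R]_n) (s : seq R) : Prop :=
  sorted (fun x y => y <= x) s /\ char_poly A = \prod_(x <- s) ('X - x%:P).

Definition component_size (n : nat) (e : rel 'I_n) (v : 'I_n) : nat :=
  #|[set u | connect e v u]|.

(* Fourth-moment trace method.  For a d-regular graph on t vertices, deflating
   the adjacency matrix A to M = A - (d/t) J replaces the eigenvalue d by 0, so
   tr (M^4) <= t B^4 when B bounds the other eigenvalues; three applications of
   Cauchy-Schwarz give (x^T M y)^4 <= |x|^4 |y|^4 tr (M^4).  If the subgraph H'
   had no component with (1 - eps) t vertices, a union of its components would
   be a set S with eps t/2 <= |S| <= t - eps t/2 that H' never leaves, so every
   edge of H between S and its complement is among the few deleted edges.  With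
   x, y the indicators of S and of its complement this forces
   (d eps / 8)^4 <= t B^4, which fails for d >= c t^(2/3), B = O(t^(1/3)) and t
   large. *)

From HB Require Import structures.
From mathcomp Require Import all_boot all_order all_algebra.
From mathcomp Require Import reals exp.
From mathcomp Require Import complex ring lra.
Set Implicit Arguments. Unset Strict Implicit. Unset Printing Implicit Defensive.
Import Order.TTheory GRing.Theory Num.Theory.
Local Open Scope ring_scope.

Lemma cauchy_schwarz (R : realFieldType) (I : finType) (f g : I -> R) :
  (\sum_i f i * g i) ^+ 2 <= (\sum_i f i ^+ 2) * (\sum_i g i ^+ 2).
Proof.
set S1 := \sum_i f i ^+ 2; set S2 := \sum_i g i ^+ 2; set S12 := \sum_i f i * g i.
have lagrange : \sum_i \sum_j (f i * g j - f j * g i) ^+ 2 = S1 * S2 + S1 * S2 - 2 * S12 ^+ 2.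
  have e1 : \sum_i \sum_j f i ^+ 2 * g j ^+ 2 = S1 * S2.
    by rewrite mulr_suml; apply: eq_bigr => i _; rewrite mulr_sumr.
  have e2 : \sum_i \sum_j f j ^+ 2 * g i ^+ 2 = S1 * S2.
    by rewrite exchange_big /= mulr_suml; apply: eq_bigr => i _; rewrite mulr_sumr.
  have e3 : \sum_i \sum_j (f i * g i) * (f j * g j) = S12 ^+ 2.
    by rewrite expr2 mulr_suml; apply: eq_bigr => i _; rewrite mulr_sumr.
  rewrite -{1}e1 -e2 -e3 mulr_sumr -!big_split -sumrB /=; apply: eq_bigr => i _.
  rewrite mulr_sumr -!big_split -sumrB /=; apply: eq_bigr => j _; ring.
have : 0 <= \sum_i \sum_j (f i * g j - f j * g i) ^+ 2.
  by apply: sumr_ge0 => i _; apply: sumr_ge0 => j _; exact: sqr_ge0.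
rewrite lagrange; lra.
Qed.

Lemma sum_sqr_vecmx_le (R : realFieldType) m n (N : 'M[R]_(m, n)) (x : 'I_m -> R) :
  \sum_j (\sum_i x i * N i j) ^+ 2 <= (\sum_i x i ^+ 2) * \sum_j \sum_i N i j ^+ 2.
Proof. by rewrite mulr_sumr; apply: ler_sum => j _; exact: cauchy_schwarz. Qed.

Section SymmetricMatrix.
Variables (R : realFieldType) (n : nat) (M : 'M[R]_n).
Hypothesis M_sym : forall i j, M i j = M j i.

Lemma sum_sqr_vecmx_sym (x : 'I_n -> R) :
  \sum_j (\sum_i x i * M i j) ^+ 2 = \sum_i x i * \sum_k x k * (M *m M) k i.
Proof.
transitivity (\sum_j \sum_i \sum_k x i * x k * (M i j * M k j)).
  apply: eq_bigr => j _; rewrite expr2 mulr_suml; apply: eq_bigr => i _.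
  by rewrite mulr_sumr; apply: eq_bigr => k _; rewrite mulrACA.
rewrite exchange_big; apply: eq_bigr => i _ /=; rewrite exchange_big mulr_sumr.
apply: eq_bigr => k _ /=; rewrite !mxE !mulr_sumr; apply: eq_bigr => j _.
by rewrite (M_sym j i) [M k j * _]mulrC !mulrA.
Qed.

Lemma mxtrace_expr4_sym : \tr (M ^+ 4) = \sum_i \sum_k (M *m M) k i ^+ 2.
Proof.
have N_sym i k : (M *m M) i k = (M *m M) k i.
  by rewrite !mxE; apply: eq_bigr => j _; rewrite mulrC (M_sym i j) (M_sym j k).
rewrite (exprM M 2 2) !expr2 -!mulmxE; apply: eq_bigr => i _.
by rewrite mxE; apply: eq_bigr => k _; rewrite N_sym.
Qed.

Lemma bilinear_expr4_le (x y : 'I_n -> R) :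
  (\sum_i \sum_j x i * M i j * y j) ^+ 4 <=
  (\sum_i x i ^+ 2) ^+ 2 * (\sum_j y j ^+ 2) ^+ 2 * \tr (M ^+ 4).
Proof.
set X2 := \sum_i x i ^+ 2; set Y2 := \sum_j y j ^+ 2.
pose z j := \sum_i x i * M i j; pose w i := \sum_k x k * (M *m M) k i.
have sqr_ge0_sum (f : 'I_n -> R) : 0 <= \sum_i f i ^+ 2.
  by apply: sumr_ge0 => i _; exact: sqr_ge0.
have xMy : \sum_i \sum_j x i * M i j * y j = \sum_j z j * y j.
  rewrite exchange_big; apply: eq_bigr => j _; rewrite mulr_suml.
  by apply: eq_bigr.
have Hz : (\sum_j z j ^+ 2) ^+ 2 <= X2 * \sum_i w i ^+ 2.
  by rewrite sum_sqr_vecmx_sym; exact: cauchy_schwarz.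
have Hw : \sum_i w i ^+ 2 <= X2 * \tr (M ^+ 4).
  by rewrite mxtrace_expr4_sym; exact: sum_sqr_vecmx_le.
have Hxy : (\sum_j z j * y j) ^+ 2 <= (\sum_j z j ^+ 2) * Y2 by exact: cauchy_schwarz.
rewrite xMy (exprM _ 2 2) /=.
have zy0 := mulr_ge0 (sqr_ge0_sum z) (sqr_ge0_sum y).
apply: (le_trans (lerXn2r 2 _ _ Hxy)); rewrite ?nnegrE ?sqr_ge0 //.
rewrite exprMn; apply: (le_trans (ler_wpM2r (sqr_ge0 Y2) Hz)).
rewrite [in X in _ <= X]mulrAC ler_wpM2r ?sqr_ge0 // expr2 -mulrA.
apply: ler_wpM2l Hw; apply: sumr_ge0 => i _; exact: sqr_ge0.
Qed.

End SymmetricMatrix.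

Lemma char_poly_similar (F : fieldType) n (P B : 'M[F]_n) : P \in unitmx ->
  char_poly (invmx P *m B *m P) = char_poly B.
Proof.
move=> Pu; rewrite /char_poly /char_poly_mx.
set Q := map_mx polyC P; set Qi := map_mx polyC (invmx P).
have QiQ : Qi *m Q = 1%:M by rewrite -map_mxM mulVmx // map_mx1.
have QQi : Q *m Qi = 1%:M by rewrite -map_mxM mulmxV // map_mx1.
have -> : 'X%:M - map_mx polyC (invmx P *m B *m P) =
    Qi *m ('X%:M - map_mx polyC B) *m Q.
  rewrite !map_mxM mulmxBr mulmxBl -/Q -/Qi; congr (_ - _).
  by rewrite scalar_mxC -mulmxA QiQ mulmx1.
by rewrite !det_mulmx mulrC mulrA -det_mulmx QQi det1 mul1r.
Qed.

Lemma exprn_similar (R : comUnitRingType) n (P B : 'M[R]_n) k : P \in unitmx ->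
  (invmx P *m B *m P) ^+ k = invmx P *m B ^+ k *m P.
Proof.
move=> Pu; elim: k => [|k IHk]; first by rewrite !expr0 mulmx1 mulVmx.
by rewrite !exprSr IHk -!mulmxE !mulmxA mulmxK.
Qed.

Lemma diag_mx_exprn (R : comNzRingType) n (d : 'rV[R]_n) k :
  diag_mx d ^+ k = diag_mx (map_mx (fun x => x ^+ k) d).
Proof.
elim: k => [|k IHk].
  by rewrite expr0 -idmxE -diag_const_mx; congr diag_mx; apply/matrixP => i j; rewrite !mxE.
rewrite exprS IHk -mulmxE mul_diag_mx; apply/matrixP => i j.
by rewrite !mxE; case: eqP => [->|]; rewrite ?mulr1n ?mulr0n ?mulr0 ?exprS.
Qed.

Lemma mxtrace_exprn_normalmx (C : numClosedFieldType) n (A : 'M[C]_n) (s : seq C) k :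
  A \is normalmx -> char_poly A = \prod_(x <- s) ('X - x%:P) ->
  \tr (A ^+ k) = \sum_(x <- s) x ^+ k.
Proof.
move=> /orthomx_spectralP A_diag cA.
set P := spectralmx A in A_diag; set sp := spectral_diag A in A_diag.
have Pu : P \in unitmx := spectral_unit A.
have c_sp : char_poly (diag_mx sp) = \prod_(x <- [seq sp 0 i | i <- enum 'I_n]) ('X - x%:P).
  rewrite char_poly_trig ?diag_mx_is_trig // big_map big_enum /=.
  by apply: eq_bigr => i _; rewrite mxE eqxx mulr1n.
have s_sp : perm_eq s [seq sp 0 i | i <- enum 'I_n].
  by apply: prod_XsubC_eq; rewrite -cA -c_sp A_diag char_poly_similar.
rewrite (perm_big _ s_sp) big_map big_enum /= A_diag exprn_similar //.
rewrite mxtrace_mulC mulKVmx // diag_mx_exprn mxtrace_diag.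
by apply: eq_bigr => i _; rewrite mxE.
Qed.

Lemma mxtrace_exprn_sym (R : rcfType) n (A : 'M[R]_n) (s : seq R) k :
  A^T = A -> char_poly A = \prod_(x <- s) ('X - x%:P) ->
  \tr (A ^+ k) = \sum_(x <- s) x ^+ k.
Proof.
move=> A_sym cA; pose f := real_complex R; pose Ac := map_mx f A.
have Ac_normal : Ac \is normalmx.
  apply: symmetric_normalmx; last first.
    by apply/mxOverP => i j; rewrite mxE; apply/complex_realP; eexists.
  rewrite qualifE /= expr0 scale1r; apply/eqP/matrixP => i j.
  by rewrite !mxE -[in LHS]A_sym mxE.
have cAc : char_poly Ac = \prod_(x <- map f s) ('X - x%:P).
  by rewrite -map_char_poly cA map_prod_XsubC big_map.
apply: (@complexI R); rewrite !rmorph_sum /=.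
under [RHS]eq_bigr do rewrite rmorphXn.
have := mxtrace_exprn_normalmx k Ac_normal cAc; rewrite big_map => <-.
have -> : Ac ^+ k = map_mx f (A ^+ k).
  by elim: k {cAc} => [|k IHk]; rewrite ?expr0 ?map_mx1 // !exprS IHk -!mulmxE map_mxM.
by apply: eq_bigr => i _; rewrite mxE.
Qed.

Lemma deflate_sqr (F : fieldType) n (A J : 'M[F]_n) (a c : F) :
  A *m J = a *: J -> J *m A = a *: J -> J *m J = c *: J -> c != 0 ->
  (A - (a / c) *: J) ^+ 2 = A ^+ 2 - (a ^+ 2 / c) *: J.
Proof.
move=> AJ JA JJ c0; rewrite !expr2 -!mulmxE.
rewrite mulmxBl !mulmxBr -!scalemxAl -!scalemxAr AJ JA JJ !scalerA.
by apply/matrixP => i j; rewrite !mxE; field.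
Qed.

Lemma mxtrace_deflate_expr4 (F : fieldType) n (A J : 'M[F]_n) (a c : F) :
  A *m J = a *: J -> J *m A = a *: J -> J *m J = c *: J -> c != 0 ->
  \tr ((A - (a / c) *: J) ^+ 4) = \tr (A ^+ 4) - a ^+ 4 / c * \tr J.
Proof.
move=> AJ JA JJ c0.
have A2J : A ^+ 2 *m J = a ^+ 2 *: J by rewrite expr2 -mulmxE -mulmxA AJ -scalemxAr AJ scalerA.
have JA2 : J *m A ^+ 2 = a ^+ 2 *: J by rewrite expr2 -mulmxE mulmxA JA -scalemxAl JA scalerA.
rewrite !(exprM _ 2 2) deflate_sqr // deflate_sqr // mxtraceD raddfN /= mxtraceZ.
by congr (_ - _ * _); rewrite -exprM.
Qed.

Lemma sum_nat_card (R : pzSemiRingType) (I : finType) (P : pred I) :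
  \sum_i ((P i)%:R : R) = #|[set i | P i]|%:R.
Proof.
rewrite -sum1dep_card natr_sum [RHS]big_mkcond /=; apply: eq_bigr => i _.
by case: (P i).
Qed.


Lemma sum_expr4_le_head (R : realFieldType) (s : seq R) (d B : R) :
  d \in s -> B < d -> (forall i : nat, (0 < i < size s)%N -> `|s`_i| <= B) ->
  \sum_(x <- s) x ^+ 4 - d ^+ 4 <= (size s)%:R * B ^+ 4.
Proof.
move=> ds Bd hs.
have d_head : index d s = 0%N.
  apply/eqP; apply: contraT; rewrite -lt0n => i0.
  have := hs (index d s); rewrite i0 index_mem ds nth_index // => /(_ isT) dB.
  by move: (le_trans (ler_norm d) dB); rewrite leNgt Bd.
case: s ds hs d_head => [//|x s] _ hs /=; case: eqP => // <- _.
rewrite big_cons addrC addKr.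
apply: (@le_trans _ _ (\sum_(y <- s) B ^+ 4)); last first.
  rewrite big_const_seq count_predT iter_addr_0 -[_ *+ _]mulr_natl.
  by apply: ler_wpM2r; rewrite ?exprn_even_ge0 ?ler_nat.
rewrite !big_seq; apply: ler_sum => y ys.
have := hs (index y s).+1; rewrite /= ltnS index_mem ys nth_index // => /(_ isT) yB.
rewrite -[y ^+ 4]ger0_norm ?exprn_even_ge0 // normrX lerXn2r ?nnegrE //.
exact: le_trans (normr_ge0 _) yB.
Qed.

Definition edge_boundary (t : nat) (e : rel 'I_t) (S : {set 'I_t}) : nat :=
  #|[set p : 'I_t * 'I_t | [&& p.1 \in S, p.2 \notin S & e p.1 p.2]]|.

Lemma edge_boundaryE (R : pzSemiRingType) t (e : rel 'I_t) (S : {set 'I_t}) :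
  (edge_boundary e S)%:R =
  \sum_u \sum_w ((u \in S)%:R * (e u w)%:R * (w \notin S)%:R : R).
Proof.
rewrite [RHS]pair_big /= -sum_nat_card; apply: eq_bigr => p _.
by case: (p.1 \in S); case: (p.2 \in S); case: (e p.1 p.2); rewrite /= ?mulr0 ?mul0r ?mulr1.
Qed.

Lemma sum_sqr_indicator (R : pzSemiRingType) t (S : {set 'I_t}) :
  \sum_k ((k \in S)%:R : R) ^+ 2 = #|S|%:R.
Proof.
have bool_sqr (b : bool) : (b%:R : R) ^+ 2 = b%:R by case: b; rewrite ?expr0n ?expr1n.
under eq_bigr do rewrite bool_sqr.
by rewrite sum_nat_card; congr _%:R; apply: eq_card => k; rewrite inE.
Qed.


Section RegularGraph.
Variables (R : realType) (t : nat) (e : rel 'I_t) (d : nat).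
Hypotheses (e_sym : symmetric e) (e_reg : regular e d).

Let A := adjmx R e.
Let J := const_mx 1 : 'M[R]_t.

Lemma adjmx_row_sum i : \sum_j A i j = d%:R.
Proof. by under eq_bigr do rewrite mxE; rewrite sum_nat_card -(e_reg i). Qed.

Lemma adjmx_mul_const : A *m J = d%:R *: J /\ J *m A = d%:R *: J.
Proof.
split; apply/matrixP => i j; rewrite !mxE mulr1.
  by rewrite -(adjmx_row_sum i); apply: eq_bigr => k _; rewrite !mxE mulr1.
by rewrite -(adjmx_row_sum j); apply: eq_bigr => k _; rewrite !mxE mul1r e_sym.
Qed.

Lemma mxtrace_deflate_adjmx4 : (0 < t)%N ->
  \tr ((A - (d%:R / t%:R) *: J) ^+ 4) = \tr (A ^+ 4) - d%:R ^+ 4.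
Proof.
move=> t_gt0; have [AJ JA] := adjmx_mul_const.
have t0 : (t%:R : R) != 0 by rewrite pnatr_eq0 -lt0n.
have JJ : J *m J = t%:R *: J.
  apply/matrixP => i j; rewrite /J !mxE mulr1.
  by under eq_bigr do rewrite !mxE mulr1; rewrite sumr_const card_ord.
have trJ : \tr J = t%:R.
  by rewrite /mxtrace; under eq_bigr do rewrite mxE; rewrite sumr_const card_ord.
by rewrite (mxtrace_deflate_expr4 AJ JA JJ t0) trJ divfK.
Qed.

Lemma regular_eigenvalue (s : seq R) : (0 < t)%N -> spectrum A s -> d%:R \in s.
Proof.
move=> t_gt0 [_ cA].
suff : eigenvalue A d%:R by rewrite eigenvalue_root_char cA root_prod_XsubC.
apply/eigenvalueP; exists (const_mx 1 : 'rV[R]_t).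
  apply/matrixP => i j; rewrite !mxE mulr1 -(adjmx_row_sum j); apply: eq_bigr => k _.
  by rewrite !mxE mul1r e_sym.
by apply/eqP => /matrixP /(_ ord0 (Ordinal t_gt0)); rewrite !mxE => /eqP; rewrite oner_eq0.
Qed.

Lemma edge_boundary_deviation4 (s : seq R) (B : R) (S : {set 'I_t}) : (0 < t)%N ->
  spectrum A s -> B < d%:R ->
  (forall i : nat, (0 < i < size s)%N -> `|s`_i| <= B) ->
  (d%:R / t%:R * (#|S|%:R * (t%:R - #|S|%:R)) - (edge_boundary e S)%:R) ^+ 4 <=
  (#|S|%:R * (t%:R - #|S|%:R)) ^+ 2 * (t%:R * B ^+ 4).
Proof.
move=> t_gt0 spec_s Bd s_gap.
pose M := A - (d%:R / t%:R) *: J.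
pose x k : R := (k \in S)%:R; pose y k : R := (k \notin S)%:R.
have M_sym i j : M i j = M j i by rewrite /M /A /J !mxE e_sym.
have cardSC : (#|~: S|%:R : R) = t%:R - #|S|%:R.
  by rewrite -[in t%:R](card_ord t) -(cardsC S) natrD addrC addKr.
have sum_y2 : \sum_k y k ^+ 2 = t%:R - #|S|%:R.
  by rewrite -cardSC -sum_sqr_indicator; apply: eq_bigr => k _; rewrite /y inE.
have xMy : \sum_i \sum_j x i * M i j * y j =
    (edge_boundary e S)%:R - d%:R / t%:R * (#|S|%:R * (t%:R - #|S|%:R)).
  have sum_x : \sum_k x k = #|S|%:R.
    by rewrite sum_nat_card; congr _%:R; apply: eq_card => k; rewrite inE.
  have sum_y : \sum_k y k = t%:R - #|S|%:R.
    by rewrite -cardSC sum_nat_card; congr _%:R; apply: eq_card => k; rewrite !inE.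
  rewrite edge_boundaryE -sum_y -sum_x mulr_suml mulr_sumr -sumrB.
  apply: eq_bigr => i _; rewrite !mulr_sumr -sumrB; apply: eq_bigr => j _.
  rewrite /M /A /J !mxE; ring.
have size_s : size s = t.
  by have := size_char_poly A; rewrite spec_s.2 size_prod_XsubC => -[].
have trM4 : \tr (M ^+ 4) <= t%:R * B ^+ 4.
  rewrite mxtrace_deflate_adjmx4 // (mxtrace_exprn_sym _ _ spec_s.2); last first.
    by apply/matrixP => i j; rewrite /A !mxE e_sym.
  rewrite -[in X in _ <= X]size_s; apply: sum_expr4_le_head => //.
  exact: regular_eigenvalue.
have := bilinear_expr4_le M_sym x y; rewrite xMy sum_sqr_indicator sum_y2.
rewrite -opprB exprNn (exprM (-1) 2 2) sqrrN !expr1n mul1r => /le_trans; apply.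
by rewrite -exprMn ler_wpM2l ?exprn_even_ge0.
Qed.

End RegularGraph.

Lemma nedges_le_regular t (e : rel 'I_t) d : regular e d -> (nedges e <= t * d)%N.
Proof.
move=> e_reg; rewrite /nedges.
apply: (@leq_trans #|[set p : 'I_t * 'I_t | e p.1 p.2]|).
  by apply: subset_leq_card; apply/subsetP => p; rewrite !inE => /andP[].
rewrite -sum1dep_card -(pair_big_dep xpredT e (fun _ _ => 1%N)) /=.
under eq_bigr do rewrite sum1dep_card e_reg.
by rewrite sum_nat_const card_ord.
Qed.

Lemma nedges_add_edge_boundary_le t (e e' : rel 'I_t) (S : {set 'I_t}) :
  (forall x y, e' x y -> e x y) -> symmetric e' -> symmetric e ->
  (forall u w, u \in S -> e' u w -> w \in S) ->
  (nedges e' + edge_boundary e S <= nedges e)%N.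
Proof.
move=> sub e'_sym e_sym S_closed.
rewrite /edge_boundary; set X := [set p : 'I_t * 'I_t | _].
pose sort_pair (p : 'I_t * 'I_t) := if (p.1 < p.2)%N then p else (p.2, p.1).
have sort_inj : {in X &, injective sort_pair}.
  move=> [a b] [c d]; rewrite !inE /sort_pair /= => /and3P[aS bS _] /and3P[cS dS _].
  case: ltnP => ab; case: ltnP => cd //= [] e1 e2; subst.
  - by rewrite aS in dS.
  - by rewrite cS in bS.
  - by [].
set E' := [set p : 'I_t * 'I_t | (p.1 < p.2)%N && e' p.1 p.2].
set E := [set p : 'I_t * 'I_t | (p.1 < p.2)%N && e p.1 p.2].
have disjoint_E' : E' :&: sort_pair @: X = set0.
  apply/setP => p; rewrite !inE; apply/negP => /andP [/andP [_ ep]] /imsetP [[a b]].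
  rewrite inE /= => /and3P [aS bS _] pf.
  move: ep; rewrite pf /sort_pair /=; case: ltnP => _ /= ep.
    by move: (S_closed _ _ aS ep); rewrite (negbTE bS).
  by move: (S_closed a b aS); rewrite e'_sym ep (negbTE bS) => /(_ isT).
have sub_E : E' :|: sort_pair @: X \subset E.
  apply/subsetP => p; rewrite !inE => /orP [/andP [lt ep]|]; first by rewrite lt sub.
  move=> /imsetP [[a b]]; rewrite inE /= => /and3P [aS bS eab] ->.
  rewrite /sort_pair /=; case: (ltngtP a b) => ab /=.
  - by rewrite ab eab.
  - by rewrite ab e_sym.
  - by move: ab aS bS => /val_inj -> ->.
have := subset_leq_card sub_E.
by rewrite cardsU disjoint_E' cards0 subn0 card_in_imset.
Qed.

Lemma exists_closed_set_between (R : realDomainType) t (e : rel 'I_t) (a B : R) :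
  0 < a -> a <= t%:R -> (forall v, (component_size e v)%:R < B) ->
  exists S : {set 'I_t}, [/\ forall u w, u \in S -> e u w -> w \in S,
     a <= #|S|%:R & #|S|%:R < a + B].
Proof.
move=> a_gt0 a_le_t small_comp.
pose S k := [set u | [exists v : 'I_t, (v < k)%N && connect e v u]].
have S_closed k u w : u \in S k -> e u w -> w \in S k.
  rewrite !inE => /existsP [v /andP [vk vu]] uw; apply/existsP; exists v.
  by rewrite vk (connect_trans vu (connect1 uw)).
have S_t : a <= #|S t|%:R.
  rewrite (_ : S t = setT) ?cardsT ?card_ord //.
  by apply/setP => u; rewrite !inE; apply/existsP; exists u; rewrite ltn_ord connect0.
have [k S_k k_min] := ex_minnP (ex_intro (fun k => a <= #|S k|%:R) t S_t).
have k_gt0 : (0 < k)%N.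
  rewrite lt0n; apply: contraTneq S_k => ->; rewrite -ltNge.
  rewrite (_ : S 0%N = set0) ?cards0 //.
  by apply/setP => u; rewrite !inE; apply/existsP => -[].
have k1_lt_t : (k.-1 < t)%N by rewrite prednK // k_min.
pose v0 := Ordinal k1_lt_t.
have S_k1 : #|S k.-1|%:R < a.
  by rewrite ltNge; apply/negP => /k_min; rewrite -{1}(prednK k_gt0) ltnn.
exists (S k); split => //; first exact: S_closed.
have S_split : S k \subset S k.-1 :|: [set u | connect e v0 u].
  apply/subsetP => u; rewrite !inE => /existsP [v /andP [vk vu]].
  have [v_lt|v_ge] := ltnP v k.-1.
    by apply/orP; left; apply/existsP; exists v; rewrite v_lt.
  suff -> : v0 = v by rewrite vu orbT.
  by apply/val_inj/eqP; rewrite /= eqn_leq v_ge -ltnS prednK.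
have := leq_trans (subset_leq_card S_split) (leq_card_setU _ _).1.
rewrite -(ler_nat R) natrD => /le_lt_trans; apply.
by rewrite addrC [a + B]addrC ltrD //; exact: small_comp.
Qed.

Lemma edge_boundary_le_deleted (R : realFieldType) t (e e' : rel 'I_t) d
    (S : {set 'I_t}) (delta : R) :
  subgraph e' e -> symmetric e -> regular e d ->
  (forall u w, u \in S -> e' u w -> w \in S) -> 0 <= delta ->
  (1 - delta) * (nedges e)%:R <= (nedges e')%:R ->
  (edge_boundary e S)%:R <= delta * (t%:R * d%:R).
Proof.
move=> [[e'_sym _] e'_sub] e_sym e_reg S_closed delta_ge0 dense.
have := nedges_add_edge_boundary_le e'_sub e'_sym e_sym S_closed.
rewrite -(ler_nat R) natrD => cut.
have := nedges_le_regular e_reg; rewrite -(ler_nat R) natrM => /(ler_wpM2l delta_ge0).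
lra.
Qed.

Lemma mul_subr_ge (R : realFieldType) (T k a : R) :
  0 <= a -> a <= T / 2%:R -> a <= k -> k <= T - a -> a * T / 2%:R <= k * (T - k).
Proof.
move=> a_ge0 a_le k_ge k_le.
have : 0 <= (k - a) * (T - a - k) by apply: mulr_ge0; lra.
have : 0 <= a * (T / 2%:R - a) by apply: mulr_ge0; lra.
nra.
Qed.

Lemma exists_closed_balanced_set (R : realFieldType) t (e : rel 'I_t) (eps : R) :
  (0 < t)%N -> 0 < eps <= 1 ->
  (forall v, (component_size e v)%:R < (1 - eps) * t%:R) ->
  exists S : {set 'I_t}, (forall u w, u \in S -> e u w -> w \in S) /\
    eps * t%:R ^+ 2 / 4%:R <= #|S|%:R * (t%:R - #|S|%:R).
Proof.
move=> t_gt0 /andP[eps_gt0 eps_le1] small_comp; set T := (t%:R : R).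
have T_ge1 : 1 <= T by rewrite ler1n.
have [||S [S_closed S_lb S_ub]] :=
  exists_closed_set_between (a := eps * T / 2%:R) _ _ small_comp.
- by rewrite divr_gt0 ?mulr_gt0 ?ltr0n // (lt_le_trans ltr01).
- by rewrite ler_pdivrMr ?ltr0n //; nra.
exists S; split => //.
have -> : eps * T ^+ 2 / 4%:R = eps * T / 2%:R * T / 2%:R by field.
apply: mul_subr_ge => //; first by rewrite divr_ge0 ?mulr_ge0 ?ler0n // ltW.
  by rewrite -mulrA ler_piMl // divr_ge0 ?ler0n.
have : eps * T / 2%:R + eps * T / 2%:R = eps * T by field.
lra.
Qed.

Theorem large_component_of_dense_subgraph (R : realType) t (e e' : rel 'I_t) d
    (s : seq R) (B eps : R) :
  (0 < t)%N -> symmetric e -> regular e d -> spectrum (adjmx R e) s -> 0 <= B ->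
  (forall i : nat, (0 < i < size s)%N -> `|s`_i| <= B) ->
  subgraph e' e -> 0 < eps <= 1 ->
  (1 - eps / 8%:R) * (nedges e)%:R <= (nedges e')%:R ->
  t%:R * B ^+ 4 < (d%:R * eps / 8%:R) ^+ 4 ->
  exists v : 'I_t, (1 - eps) * t%:R <= (component_size e' v)%:R.
Proof.
move=> t_gt0 e_sym e_reg spec_s B_ge0 s_gap sub eps_range dense mixing_fails.
have /andP[eps_gt0 eps_le1] := eps_range.
set T := (t%:R : R); set D := (d%:R : R).
have T_ge1 : 1 <= T by rewrite ler1n.
have W_ge0 : 0 <= D * eps / 8%:R by rewrite divr_ge0 ?mulr_ge0 ?ler0n // ltW.
have B_lt_D : B < D.
  have W_le : D * eps / 8%:R <= D by rewrite ler_pdivrMr ?ltr0n //; nra.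
  rewrite -(ltr_pXn2r (_ : 0 < 4)%N) ?nnegrE ?ler0n //.
  apply: (le_lt_trans _ (lt_le_trans mixing_fails _)); first by rewrite ler_peMl ?exprn_ge0.
  by rewrite lerXn2r ?nnegrE ?ler0n.
case: (pickP (fun v => (1 - eps) * T <= (component_size e' v)%:R)) => [v|small].
  by exists v.
have small_comp v : (component_size e' v)%:R < (1 - eps) * T by rewrite ltNge small.
have [S [S_closed P_lb]] := exists_closed_balanced_set t_gt0 eps_range small_comp.
set k := (#|S|%:R : R) in P_lb *; set P := k * (T - k) in P_lb.
have P_ge0 : 0 <= P.
  by apply: le_trans P_lb; rewrite divr_ge0 ?mulr_ge0 ?ler0n // ltW.
have P_le : P <= T ^+ 2.
  have : k <= T by rewrite /k /T ler_nat -[t in (_ <= t)%N]card_ord max_card.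
  rewrite /P; nra.
have boundary_ub : (edge_boundary e S)%:R <= eps / 8%:R * (T * D).
  apply: edge_boundary_le_deleted sub e_sym e_reg S_closed _ dense.
  by rewrite divr_ge0 ?ler0n // ltW.
have deviation_lb : T * (D * eps / 8%:R) <= D / T * P - (edge_boundary e S)%:R.
  have : D / T * (eps * T ^+ 2 / 4%:R) <= D / T * P.
    by rewrite ler_wpM2l // divr_ge0 ?ler0n.
  rewrite (_ : D / T * _ = D * eps * T / 4%:R); last by field; rewrite pnatr_eq0 -lt0n.
  lra.
have := edge_boundary_deviation4 e_sym e_reg S t_gt0 spec_s B_lt_D s_gap.
rewrite -/T -/D -/k -/P => mixing; exfalso; move: mixing; apply/negP; rewrite -ltNge.
apply: (le_lt_trans (y := T ^+ 4 * (T * B ^+ 4))).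
  rewrite ler_wpM2r ?mulr_ge0 ?exprn_ge0 ?ler0n // (exprM T 2 2).
  by rewrite lerXn2r ?nnegrE ?exprn_ge0.
apply: (lt_le_trans (y := (T * (D * eps / 8%:R)) ^+ 4)).
  by rewrite exprMn ltr_pM2l ?exprn_gt0 ?(lt_le_trans ltr01).
have Tw_ge0 : 0 <= T * (D * eps / 8%:R) by rewrite mulr_ge0 ?ler0n.
by rewrite lerXn2r ?nnegrE // (le_trans Tw_ge0 deviation_lb).
Qed.

Lemma exists_twelfth_root (R : realType) (x : R) : 0 <= x ->
  exists2 u : R, 0 <= u &
    [/\ x = u ^+ 12, x `^ (2%:R / 3%:R) = u ^+ 8 & x `^ (1%:R / 3%:R) = u ^+ 4].
Proof.
move=> x_ge0; exists (x `^ (1 / 12%:R)); first exact: powR_ge0.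
have root_pow k : (x `^ (1 / 12%:R)) ^+ k = x `^ (1 / 12%:R * k%:R).
  by rewrite -powR_mulrn ?powR_ge0 // -powRrM.
rewrite !root_pow; split.
- by rewrite (_ : 1 / 12%:R * 12%:R = 1 :> R) ?powRr1 //; field.
- by congr (_ `^ _); field.
- by congr (_ `^ _); field.
Qed.

Lemma degree_dominates_eigenvalue_bound (R : realFieldType) (c1 C eps u D : R) :
  0 < c1 -> 0 < C -> 0 < eps -> 8%:R * C / (c1 * eps) < u -> c1 * u ^+ 8 <= D ->
  u ^+ 12 * (C * u ^+ 4) ^+ 4 < (D * eps / 8%:R) ^+ 4.
Proof.
move=> c1_gt0 C_gt0 eps_gt0 u_large D_lb.
have u_gt0 : 0 < u by apply: lt_trans u_large; rewrite !divr_gt0 ?mulr_gt0 ?ltr0n.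
have Cu : C < c1 * eps / 8%:R * u.
  by move: u_large; rewrite ltr_pdivrMr ?mulr_gt0 // => ?; lra.
have W_ge0 : 0 <= c1 * u ^+ 8 * eps / 8%:R.
  by rewrite divr_ge0 ?ler0n ?mulr_ge0 ?exprn_ge0 ?ltW.
apply: (@lt_le_trans _ _ ((c1 * u ^+ 8 * eps / 8%:R) ^+ 4)); last first.
  rewrite lerXn2r ?nnegrE // ?(le_trans W_ge0) //;
    by rewrite ler_pM2r ?invr_gt0 ?ltr0n // ler_pM2r.
rewrite (_ : u ^+ 12 * _ = C ^+ 4 * u ^+ 28); last by ring.
rewrite (_ : (c1 * u ^+ 8 * eps / 8%:R) ^+ 4 = (c1 * eps / 8%:R * u) ^+ 4 * u ^+ 28);
  last by ring.
rewrite ltr_pM2r ?exprn_gt0 // ltr_pXn2r ?nnegrE ?(ltW C_gt0) //.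
exact: le_trans (ltW C_gt0) (ltW Cu).
Qed.

Unset Implicit Arguments.
Set Strict Implicit.

Theorem corollary4p10 (R : realType)
  (T : pred nat) (G : forall t : nat, rel 'I_t) (d : nat -> nat)
  (HTpos : forall t, T t -> (0 < t)%N)
  (HTinf : forall N : nat, exists t, (N <= t)%N /\ T t)
  (Hsimple : forall t, T t -> simple_graph (G t))
  (Htri : forall t, T t -> triangle_free (G t))
  (Hreg : forall t, T t -> regular (G t) (d t))
  (Hdeg : exists c1 c2 : R, 0 < c1 /\ 0 < c2 /\ exists N : nat,
      forall t, T t -> (N <= t)%N ->
        c1 * (t%:R `^ (2%:R / 3%:R)) <= (d t)%:R <= c2 * (t%:R `^ (2%:R / 3%:R)))
  (Heig : exists C : R, 0 < C /\ exists N : nat,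
      forall t, T t -> (N <= t)%N ->
        exists s : seq R, spectrum (adjmx R (G t)) s /\
          forall i : nat, (0 < i < size s)%N -> `|s`_i| <= C * (t%:R `^ (1%:R / 3%:R)))
  (G' : forall t : nat, rel 'I_t)
  (Hsub : forall t, T t -> subgraph (G' t) (G t))
  (Hedges : forall eps : R, 0 < eps -> exists N : nat,
      forall t, T t -> (N <= t)%N -> (1 - eps) * (nedges (G t))%:R <= (nedges (G' t))%:R) :
  forall eps : R, 0 < eps -> exists N : nat,
    forall t, T t -> (N <= t)%N ->
      exists v : 'I_t, (1 - eps) * t%:R <= (component_size (G' t) v)%:R.
Proof.
move=> eps eps_gt0.
have [eps_ge1|eps_lt1] := leP 1 eps.
  exists 0%N => t Tt _; exists (Ordinal (HTpos t Tt)).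
  by apply: le_trans (ler0n _ _); rewrite mulr_le0_ge0 ?ler0n // subr_le0.
have [c1 [c2 [c1_gt0 [_ [Nd Hd]]]]] := Hdeg.
have [C [C_gt0 [Ne He]]] := Heig.
have [|Nh Hh] := Hedges (eps / 8%:R); first by rewrite divr_gt0 ?ltr0n.
pose K := 8%:R * C / (c1 * eps).
exists (maxn (maxn Nd Ne) (maxn Nh (Num.truncn (K ^+ 12)).+1)) => t Tt.
rewrite !geq_max => /andP[/andP[tNd tNe] /andP[tNh tK]].
have [u u_ge0 [tE t23 t13]] := exists_twelfth_root (ler0n R t).
have /andP[d_lb _] := Hd t Tt tNd; rewrite t23 in d_lb.
have [s [spec_s s_gap]] := He t Tt tNe.
have [G_sym _] := Hsimple t Tt.
have K_lt_u : K < u.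
  have K_ge0 : 0 <= K by rewrite divr_ge0 ?mulr_ge0 ?ler0n ?ltW.
  rewrite -(ltr_pXn2r (_ : 0 < 12)%N) ?nnegrE // -tE.
  by apply: (lt_le_trans (truncnS_gt _)); rewrite ler_nat.
apply: (large_component_of_dense_subgraph (B := C * u ^+ 4) (HTpos t Tt) G_sym
  (Hreg t Tt) spec_s _ _ (Hsub t Tt) _ (Hh t Tt tNh)).
- exact: mulr_ge0 (ltW C_gt0) (exprn_ge0 _ u_ge0).
- by move=> i /s_gap; rewrite t13.
- by rewrite eps_gt0 ltW.
- by rewrite tE (degree_dominates_eigenvalue_bound c1_gt0 C_gt0 eps_gt0 K_lt_u d_lb).
Qed.
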